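(* Let $n$ be a positive integer, $k$ an integer with $0\le k\le n$, and $0<\phi<\infty$. For $\ell = 0,\dots,n-k$ set $H_\ell = \phi^\ell\, S(n-\ell,k,\phi)/S(n,k,\phi)$. Then the moment generating function $m(t)=\mathbb{E}(e^{tR})$ of a random variable $R\sim\mathrm{Spillage}(n,k,\phi)$ satisfies, for all real $t$, $$m(t) = e^{t(n-k)}\sum_{\ell=0}^{n-k}\binom{n}{\ell}(e^{-t}-1)^\ell\, H_\ell.$$
   Context: $S(j,k)$ denotes the (central) Stirling numbers of the second kind. The noncentral Stirling numbers of the second kind are defined by $S(n,k,\phi) = \sum_{r=0}^{n-k}\binom{n}{k+r}\phi^{n-k-r}S(k+r,k)$ (zero if $n<k$). The spillage distribution $\mathrm{Spillage}(n,k,\phi)$ (for $0<\phi<\infty$) is the distribution on $\{0,\dots,n-k\}$ with mass function $\mathrm{Spillage}(r\mid n,k,\phi) = \binom{n}{k+r}\phi^{n-k-r}S(k+r,k)/S(n,k,\phi)$. *)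

From Stdlib Require Import Reals Arith.
Open Scope R_scope.

Fixpoint stirling2 (n k : nat) : nat :=
  match n, k with
  | O, O => 1%nat
  | O, S _ => 0%nat
  | S _, O => 0%nat
  | S n', S k' => (S k' * stirling2 n' (S k') + stirling2 n' k')%nat
  end.

Definition ncstirling2 (n k : nat) (phi : R) : R :=
  if (n <? k)%nat then 0 else
  sum_f_R0 (fun r => C n (k + r) * phi ^ (n - k - r) * INR (stirling2 (k + r) k))
           (n - k).

Definition spillage_pmf (n k : nat) (phi : R) (r : nat) : R :=
  C n (k + r) * phi ^ (n - k - r) * INR (stirling2 (k + r) k) / ncstirling2 n k phi.

Definition spillage_mgf (n k : nat) (phi t : R) : R :=
  sum_f_R0 (fun r => exp (t * INR r) * spillage_pmf n k phi r) (n - k).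

Definition Hcoef (n k : nat) (phi : R) (l : nat) : R :=
  phi ^ l * ncstirling2 (n - l) k phi / ncstirling2 n k phi.

(* The law of R is proportional to r |-> C(n,k+r) phi^(n-k-r) S(k+r,k), so
   E(e^{tR}) S(n,k,phi) = e^{t(n-k)} S(n,k,e^{-t} phi).  The theorem is then the
   translation formula S(n,k,phi+psi) = sum_l C(n,l) psi^l S(n-l,k,phi) at
   psi = (e^{-t}-1) phi; the latter follows by expanding (phi+psi)^(n-k-r)
   binomially, using C(n,j) C(n-j,l) = C(n,l) C(n-l,j), and swapping the two
   sums over the triangle r + l <= n - k. *)
From Stdlib Require Import Reals Arith Lia.
Open Scope R_scope.

Lemma exp_pow_INR (x : R) (m : nat) : exp x ^ m = exp (x * INR m).
Proof.
  induction m as [|m IH].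
  - now rewrite Rmult_0_r, exp_0.
  - rewrite S_INR; simpl; rewrite IH, <- exp_plus; f_equal; ring.
Qed.

Lemma sum_f_R0_exchange (f : nat -> nat -> R) (a b : nat) :
  sum_f_R0 (fun i => sum_f_R0 (fun j => f i j) b) a =
  sum_f_R0 (fun j => sum_f_R0 (fun i => f i j) a) b.
Proof.
  induction a as [|a IH]; simpl; [reflexivity|].
  now rewrite IH, <- sum_plus.
Qed.

Lemma sum_f_R0_pad_zero (f : nat -> R) (m d : nat) : (m <= d)%nat ->
  sum_f_R0 (fun i => if (i <=? m)%nat then f i else 0) d = sum_f_R0 f m.
Proof.
  intro Hmd; induction d as [|d IH].
  - now replace m with 0%nat by lia.
  - destruct (Nat.eq_dec m (S d)) as [->|Hne].
    + rewrite !tech5, Nat.leb_refl; f_equal.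
      apply sum_eq; intros i Hi.
      now replace (i <=? S d)%nat with true by (symmetry; apply Nat.leb_le; lia).
    + rewrite tech5, IH by lia.
      replace (S d <=? m)%nat with false by (symmetry; apply Nat.leb_gt; lia).
      ring.
Qed.

Lemma sum_f_R0_triangle_exchange (f : nat -> nat -> R) (d : nat) :
  sum_f_R0 (fun i => sum_f_R0 (fun j => f i j) (d - i)) d =
  sum_f_R0 (fun j => sum_f_R0 (fun i => f i j) (d - j)) d.
Proof.
  set (g i j := if (j <=? d - i)%nat then f i j else 0).
  transitivity (sum_f_R0 (fun i => sum_f_R0 (fun j => g i j) d) d).
  { apply sum_eq; intros i Hi; symmetry; apply sum_f_R0_pad_zero; lia. }
  rewrite sum_f_R0_exchange.
  apply sum_eq; intros j Hj.
  rewrite <- (sum_f_R0_pad_zero (fun i => f i j) (d - j) d) by lia.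
  apply sum_eq; intros i Hi; unfold g.
  destruct (Nat.leb_spec j (d - i)), (Nat.leb_spec i (d - j)); lia || reflexivity.
Qed.

Lemma C_mul_C_sub_comm (n i j : nat) : (i + j <= n)%nat ->
  C n i * C (n - i) j = C n j * C (n - j) i.
Proof.
  intro Hijn; unfold C.
  replace (n - i - j)%nat with (n - j - i)%nat by lia.
  pose proof (INR_fact_neq_0 n); pose proof (INR_fact_neq_0 i);
  pose proof (INR_fact_neq_0 j); pose proof (INR_fact_neq_0 (n - i));
  pose proof (INR_fact_neq_0 (n - j)); pose proof (INR_fact_neq_0 (n - j - i)).
  field; repeat split; assumption.
Qed.

Lemma ncstirling2_of_le (n k : nat) (phi : R) : (k <= n)%nat ->
  ncstirling2 n k phi =
  sum_f_R0 (fun r => C n (k + r) * phi ^ (n - k - r) * INR (stirling2 (k + r) k))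
           (n - k).
Proof.
  intro Hkn; unfold ncstirling2.
  now replace (n <? k)%nat with false by (symmetry; apply Nat.ltb_ge; lia).
Qed.

Lemma ncstirling2_shift (n k : nat) (phi psi : R) : (k <= n)%nat ->
  ncstirling2 n k (phi + psi) =
  sum_f_R0 (fun l => C n l * psi ^ l * ncstirling2 (n - l) k phi) (n - k).
Proof.
  intro Hkn; rewrite ncstirling2_of_le by exact Hkn.
  set (term r l := C n l * C (n - l) (k + r) * psi ^ l * phi ^ (n - l - k - r) *
         INR (stirling2 (k + r) k)).
  transitivity (sum_f_R0 (fun r => sum_f_R0 (fun l => term r l) (n - k - r)) (n - k)).
  - apply sum_eq; intros r Hr.
    rewrite Rplus_comm, binomial, Rmult_comm, <- Rmult_assoc, scal_sum.
    apply sum_eq; intros l Hl; unfold term.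
    replace (n - k - r - l)%nat with (n - l - k - r)%nat by lia.
    replace (n - k - r)%nat with (n - (k + r))%nat by lia.
    rewrite (C_mul_C_sub_comm n l (k + r)) by lia.
    ring.
  - rewrite sum_f_R0_triangle_exchange.
    apply sum_eq; intros l Hl.
    rewrite (ncstirling2_of_le (n - l)) by lia.
    replace (n - k - l)%nat with (n - l - k)%nat by lia.
    rewrite scal_sum; apply sum_eq; intros r Hr; unfold term; ring.
Qed.

Lemma spillage_mgf_ncstirling2 (n k : nat) (phi t : R) : (k <= n)%nat ->
  spillage_mgf n k phi t =
  exp (t * INR (n - k)) * ncstirling2 n k (exp (- t) * phi) / ncstirling2 n k phi.
Proof.
  intro Hkn; unfold spillage_mgf, spillage_pmf.
  rewrite (ncstirling2_of_le n k (exp (- t) * phi)) by exact Hkn.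
  unfold Rdiv; rewrite scal_sum, Rmult_comm, scal_sum.
  apply sum_eq; intros r Hr.
  rewrite Rpow_mult_distr, exp_pow_INR, minus_INR by exact Hr.
  replace (t * INR r) with (- t * (INR (n - k) - INR r) + t * INR (n - k)) by ring.
  rewrite exp_plus; ring.
Qed.

Theorem lemma2 (n k : nat) (phi t : R) :
  (0 < n)%nat -> (k <= n)%nat -> 0 < phi ->
  spillage_mgf n k phi t =
  exp (t * INR (n - k)) *
  sum_f_R0 (fun l => C n l * (exp (- t) - 1) ^ l * Hcoef n k phi l) (n - k).
Proof.
  intros _ Hkn _.
  rewrite spillage_mgf_ncstirling2 by exact Hkn.
  replace (exp (- t) * phi) with (phi + (exp (- t) - 1) * phi) by ring.
  rewrite ncstirling2_shift by exact Hkn.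
  unfold Rdiv; rewrite Rmult_assoc; f_equal.
  rewrite Rmult_comm, scal_sum; apply sum_eq; intros l _; unfold Hcoef.
  rewrite Rpow_mult_distr; unfold Rdiv; ring.
Qed.
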